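(* Let $(A,S,P,C_w,C_l)$ be a common knowledge distinguishing debate game. Let $m,n$ be positive integers and $\varepsilon\in[0,1]$ be such that, if $s$ is sampled according to $P$, the probability that $|C_w(s)|<m$ or $|C_l(s)|>n$ is at most $\varepsilon$. Suppose $m>n$ and set $r=m/n$. Let $\alpha\in(0,1]$ and $k,l$ be positive integers. Let $(\mu_i)_{i=1}^k$ be a non-increasing sequence in $(0,1]$, and $(\nu_j)_{j=1}^l$ a non-decreasing sequence in $[\alpha/\log_2(r),\infty)$. Define the following quantities: - $\theta_{i,j}=e^{-\mu_i\alpha r^{1-\nu_j}}$ for $1\le i\le k$, $1\le j\le l$; - $\zeta_i=e^{-\alpha r}\left(\frac{e}{\mu_i}\right)^{\mu_i\alpha r}$ for $1\le i\le k$, and $\zeta_0=1$; - $\xi_j=e^{-\alpha}r^{-\nu_j\log_2\left(\frac{\nu_j\log_2(r)}{e\alpha}\right)}$ for $1\le j\le l$, and $\xi_0=1$. Then there exists a policy with error at most $\sum_{i=1}^k\sum_{j=1}^l\theta_{i,j}\zeta_{i-1}\xi_{j-1}+\zeta_k+\xi_l+\varepsilon$.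
   Context: Let $\delta$ be a special default action. A CKDDG is a tuple $(A,S,P,C_w,C_l)$ with $A$ a finite set, $\delta\notin A$, $S$ a finite set of scenarios, $P$ a probability mass function on $S$, and $C_w,C_l:S\to\mathcal P(A)$. $C_w(s)$ and $C_l(s)$ are the actions available to the desired winner and the desired loser in scenario $s$. A policy is a map $M:\{1,2\}\times(A\cup\{\delta\})^2\to[0,1]$ with $M(1,a_1,a_2)+M(2,a_1,a_2)=1$ for all $a_1,a_2$. For a policy $M$ and $j\in\{1,2\}$, $s\in S$, let $w^i_M((j,s))$ be the value to agent $i$ of the two-player zero-sum game with payoff matrix $M(i,\cdot,\cdot)$ in which agent $j$ (the desired winner) chooses from $C_w(s)\cup\{\delta\}$ and the other agent chooses from $C_l(s)\cup\{\delta\}$. The error of $M$ is $\mathbb E_{s\sim P}\left[\frac{w^1_M((2,s))+w^2_M((1,s))}{2}\right]$, i.e. the probability that the desired loser wins when the roles are assigned uniformly at random. *)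

From HB Require Import structures.
From mathcomp Require Import all_boot all_order all_algebra.
From mathcomp Require Import all_classical all_reals.
From mathcomp Require Import sequences exp.
Set Implicit Arguments. Unset Strict Implicit. Unset Printing Implicit Defensive.
Import Order.TTheory GRing.Theory Num.Theory.
Local Open Scope ring_scope.
Local Open Scope classical_set_scope.

Inductive agent := Ag1 | Ag2.

Definition agent_eqb (i j : agent) : bool :=
  match i, j with Ag1, Ag1 | Ag2, Ag2 => true | _, _ => false end.

(* Actions are [option A]: [None] is the default action delta (delta \notin A). *)
Section Debate.
Variables (R : realType) (A S : finType).

Definition is_policy (M : agent -> option A -> option A -> R) : Prop :=
  (forall i a1 a2, 0 <= M i a1 a2 <= 1) /\
  (forall a1 a2, M Ag1 a1 a2 + M Ag2 a1 a2 = 1).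

Definition payoff (M : agent -> option A -> option A -> R) (i : agent)
  (a b : option A) : R :=
  match i with Ag1 => M Ag1 a b | Ag2 => M Ag2 b a end.

Definition mixed (D : {set option A}) (x : option A -> R) : Prop :=
  (forall a, 0 <= x a) /\ (forall a, a \notin D -> x a = 0) /\
  \sum_a x a = 1.

(* Value (to agent i) of the finite two-player zero-sum game with payoff
   matrix M(i,.,.), where agent i chooses (mixed) from Di and the opponent
   from Do: the max-min value  sup_x min_{b in Do} E_{a~x} payoff. *)
Definition game_value (M : agent -> option A -> option A -> R) (i : agent)
  (Di Do : {set option A}) : R :=
  sup [set v : R | exists x, mixed Di x /\
         forall b, b \in Do -> v <= \sum_a x a * payoff M i a b].

Definition with_delta (C : {set A}) : {set option A} :=
  None |: [set Some a | a in C].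

(* w^i_M((j,s)) : agent j is the desired winner in scenario s. *)
Definition w (Cw Cl : S -> {set A}) (M : agent -> option A -> option A -> R)
  (i j : agent) (s : S) : R :=
  if agent_eqb i j then game_value M i (with_delta (Cw s)) (with_delta (Cl s))
  else game_value M i (with_delta (Cl s)) (with_delta (Cw s)).

Definition is_pmf (P : S -> R) : Prop :=
  (forall s, 0 <= P s) /\ \sum_s P s = 1.

Definition policy_error (P : S -> R) (Cw Cl : S -> {set A})
  (M : agent -> option A -> option A -> R) : R :=
  \sum_s P s * ((w Cw Cl M Ag1 Ag2 s + w Cw Cl M Ag2 Ag1 s) / 2).

End Debate.

Definition log2 {R : realType} (x : R) : R := ln x / ln 2.

From HB Require Import structures.
From mathcomp Require Import all_boot all_order all_algebra.
From mathcomp Require Import all_classical all_reals.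
From mathcomp Require Import sequences exp.
From mathcomp Require Import ring lra zify.
Import Order.TTheory GRing.Theory Num.Theory.
Set Implicit Arguments. Unset Strict Implicit. Unset Printing Implicit Defensive.
Local Open Scope ring_scope.

(* The policy is random: each agent's actions are selected independently with
   probability p = alpha / n, a selected action beats an unselected one, and
   two selected actions are compared by a uniformly random tournament.  The
   desired loser can only win if no selected action of the winner beats all
   selected actions of the loser; with X selected winner actions and Y
   selected loser actions this has probability (1 - 2^-Y)^X.  Cutting the
   ranges of X and Y into the layers given by mu and nu, this probability is
   at most theta on each pair of layers, while Chernoff bounds control the
   lower tail of X (zeta) and the upper tail of Y (xi).  Averaging over
   scenarios bounds the expected error, so some realisation of the random
   policy does at least as well. *)

Lemma half_ge0_le1 (R : numFieldType) : 0 <= (1 / 2 : R) <= 1.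
Proof. by rewrite divr_ge0 //= ler_pdivrMr // mul1r ler1n. Qed.

Section Expectation.
Variable R : realType.

Definition expect (T : finType) (w f : T -> R) : R := \sum_t w t * f t.

Definition prob (T : finType) (w : T -> R) (E : pred T) : R :=
  expect w (fun t => (E t)%:R).

Definition coin (p : R) (b : bool) : R := if b then p else 1 - p.

Definition ffun_pmf (I T : finType) (w : T -> R) (f : {ffun I -> T}) : R :=
  \prod_i w (f i).

Definition pair_pmf (T1 T2 : finType) (w1 : T1 -> R) (w2 : T2 -> R)
  (x : T1 * T2) : R :=
  w1 x.1 * w2 x.2.

Section Linearity.
Variable T : finType.
Implicit Types w f g : T -> R.

Lemma eq_expect w f g : f =1 g -> expect w f = expect w g.
Proof. by move=> fg; apply: eq_bigr => t _; rewrite fg. Qed.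

Lemma expectD w f g :
  expect w (fun t => f t + g t) = expect w f + expect w g.
Proof.
by rewrite /expect -big_split; apply: eq_bigr => t _; rewrite mulrDr.
Qed.

Lemma expectB w f g :
  expect w (fun t => f t - g t) = expect w f - expect w g.
Proof. by rewrite /expect -sumrB; apply: eq_bigr => t _; rewrite mulrBr. Qed.

Lemma expectZ w c f : expect w (fun t => c * f t) = c * expect w f.
Proof. by rewrite /expect big_distrr; apply: eq_bigr => t _; rewrite mulrCA. Qed.

Lemma expect_sum w (J : Type) (r : seq J) (P : pred J) (F : J -> T -> R) :
  expect w (fun t => \sum_(j <- r | P j) F j t) =
  \sum_(j <- r | P j) expect w (F j).
Proof.
by rewrite /expect exchange_big; apply: eq_bigr => t _; rewrite big_distrr.
Qed.

Lemma expect_const w c : is_pmf w -> expect w (fun=> c) = c.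
Proof. by case=> _ w1; rewrite /expect -big_distrl /= w1 mul1r. Qed.

Lemma ler_expect w f g : (forall t, 0 <= w t) -> (forall t, f t <= g t) ->
  expect w f <= expect w g.
Proof. by move=> w0 fg; apply: ler_sum => t _; rewrite ler_wpM2l. Qed.

Lemma expect_ge0 w f : (forall t, 0 <= w t) -> (forall t, 0 <= f t) ->
  0 <= expect w f.
Proof. by move=> w0 f0; apply: sumr_ge0 => t _; rewrite mulr_ge0. Qed.

Lemma exists_le_expect w f : is_pmf w -> exists t, f t <= expect w f.
Proof.
case=> w0 w1; case: (pickP (@predT T)) => [t0 _ | T0]; last first.
  by move: w1; rewrite big_pred0 // => /eqP; rewrite eq_sym oner_eq0.
have [t _ ft] := @arg_minP _ R T t0 xpredT f isT.
exists t; rewrite /expect -[f t]mul1r -w1 big_distrl /=.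
by apply: ler_sum => u _; rewrite ler_wpM2l ?ft.
Qed.

Lemma expect_invol w f (phi : T -> T) : involutive phi ->
  (forall t, w (phi t) = w t) -> expect w (f \o phi) = expect w f.
Proof.
move=> phiK wphi; rewrite /expect (reindex_inj (inv_inj phiK)) /=.
by apply: eq_bigr => t _; rewrite wphi phiK.
Qed.

End Linearity.

Lemma expect_pair (T1 T2 : finType) (w1 : T1 -> R) (w2 : T2 -> R)
    (f : T1 * T2 -> R) :
  expect (pair_pmf w1 w2) f =
  expect w1 (fun x => expect w2 (fun y => f (x, y))).
Proof.
rewrite /expect [RHS](eq_bigr (fun x => \sum_y w1 x * w2 y * f (x, y))).
  by rewrite pair_bigA; apply: eq_bigr => -[x y].
by move=> x _; rewrite big_distrr /=; apply: eq_bigr => y _; rewrite mulrA.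
Qed.

Lemma is_pmf_pair (T1 T2 : finType) (w1 : T1 -> R) (w2 : T2 -> R) :
  is_pmf w1 -> is_pmf w2 -> is_pmf (pair_pmf w1 w2).
Proof.
move=> pmf1 pmf2; split=> [x|].
  by rewrite mulr_ge0 //; [case: pmf1 | case: pmf2].
transitivity (expect (pair_pmf w1 w2) (fun=> 1)).
  by apply: eq_bigr => x _; rewrite mulr1.
rewrite expect_pair -[RHS](expect_const 1 pmf1).
by apply: eq_expect => x /=; rewrite expect_const.
Qed.

Lemma expect_prod (I T : finType) (w : T -> R) (F : I -> T -> R) :
  expect (ffun_pmf w) (fun f => \prod_i F i (f i)) =
  \prod_i expect w (F i).
Proof.
rewrite /expect (bigA_distr_bigA (fun i t => w t * F i t)).
by apply: eq_bigr => f _; rewrite /ffun_pmf big_split.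
Qed.

Lemma is_pmf_ffun (I T : finType) (w : T -> R) :
  is_pmf w -> is_pmf (ffun_pmf (I := I) w).
Proof.
move=> [w0 w1]; split=> [f|]; first by apply: prodr_ge0 => i _.
rewrite -(bigA_distr_bigA (fun _ t => w t)).
by rewrite big1 // => i _; rewrite w1.
Qed.

Lemma is_pmf_coin p : 0 <= p <= 1 -> is_pmf (coin p).
Proof.
move=> /andP[p0 p1]; split=> [[]|]; rewrite /coin ?subr_ge0 //.
by rewrite big_bool /= addrC subrK.
Qed.

Lemma expect_coin p (f : bool -> R) :
  expect (coin p) f = p * f true + (1 - p) * f false.
Proof. by rewrite /expect big_bool. Qed.

End Expectation.

Lemma nat_of_bool_le_expR (R : realType) (b : bool) (x : R) :
  (b -> 0 <= x) -> (b%:R : R) <= expR x.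
Proof. by case: b => [/(_ isT) x0 | _]; rewrite ?expR_ge0 // -expR0 ler_expR. Qed.

Section Chernoff.
Variables (R : realType) (I : finType).
Implicit Types (p z : R) (W L : {set I}) (s : {ffun I -> bool}).

Definition selection W s : {set I} := [set a in W | s a].

Definition sel_count W s : nat := #|selection W s|.

Lemma expect_pow_sel_count p z W :
  expect (ffun_pmf (coin p)) (fun s => z ^+ sel_count W s) =
  (p * z + (1 - p)) ^+ #|W|.
Proof.
have selE s : z ^+ sel_count W s = \prod_a (if (a \in W) && s a then z else 1).
  by rewrite -prodr_const -big_mkcond; apply: eq_bigl => a; rewrite !inE.
rewrite (eq_expect _ selE).
rewrite (expect_prod _ (fun a b => if (a \in W) && b then z else 1)).
rewrite -prodr_const [RHS]big_mkcond; apply: eq_bigr => a _; rewrite expect_coin.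
by case: (a \in W); rewrite /= ?mulr1 // addrC subrK.
Qed.

Lemma expect_pow_sel_count_le p z W : 0 <= p <= 1 -> 0 <= z ->
  expect (ffun_pmf (coin p)) (fun s => z ^+ sel_count W s) <=
  expR (p * (z - 1) * #|W|%:R).
Proof.
move=> /andP[p0 p1] z0; rewrite expect_pow_sel_count expRM_natr.
apply: lerXn2r; rewrite ?nnegrE ?expR_ge0 //.
  by rewrite addr_ge0 ?mulr_ge0 ?subr_ge0.
by rewrite (_ : _ + _ = 1 + p * (z - 1)) ?expR_ge1Dx //; ring.
Qed.

(* Markov's inequality for [z ^ (X - b)], which is at least 1 on [E]. *)
Lemma chernoff p z (b : R) W (E : pred {ffun I -> bool}) :
  0 <= p <= 1 -> 0 < z ->
  (forall s, E s -> 0 <= ln z * ((sel_count W s)%:R - b)) ->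
  prob (ffun_pmf (coin p)) E <=
  expR (p * (z - 1) * #|W|%:R - b * ln z).
Proof.
move=> p01 z0 hE; have pmf := is_pmf_ffun I (is_pmf_coin p01).
apply: (@le_trans _ _ (expect (ffun_pmf (coin p))
    (fun s => expR (- (b * ln z)) * z ^+ sel_count W s))).
  apply: ler_expect => [s|s]; first by case: pmf.
  rewrite -[z in z ^+ _]lnK ?posrE // -expRM_natr -expRD.
  by apply: nat_of_bool_le_expR => /hE; rewrite mulrBr [b * _]mulrC addrC.
rewrite expectZ addrC expRD ler_wpM2l ?expR_ge0 //.
exact: expect_pow_sel_count_le (ltW z0).
Qed.

Lemma chernoff_lower p (mu : R) (m : nat) W :
  0 <= p <= 1 -> 0 < mu <= 1 -> (m <= #|W|)%N ->
  prob (ffun_pmf (coin p)) [pred s | (sel_count W s)%:R < mu * (p * m%:R)] <=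
  expR (- (p * m%:R)) * powR (expR 1 / mu) (mu * (p * m%:R)).
Proof.
move=> p01 /andP[mu0 mu1] mW; have /andP[p0 _] := p01.
apply: le_trans (chernoff (b := mu * (p * m%:R)) (W := W) p01 mu0 _) _.
  move=> s /ltW hs; apply: mulr_le0 (ln_le0 mu1) _.
  by rewrite subr_le0.
rewrite /powR gt_eqF ?divr_gt0 ?expR_gt0 // -expRD ler_expR.
rewrite ln_div ?posrE ?expR_gt0 // expRK.
have: p * (mu - 1) * #|W|%:R <= p * (mu - 1) * m%:R.
  by rewrite ler_wnM2l ?ler_nat // mulr_ge0_le0 // subr_le0.
lra.
Qed.

Lemma chernoff_upper p (t : R) (n : nat) L :
  0 <= p <= 1 -> 0 < p * n%:R <= t -> (#|L| <= n)%N ->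
  prob (ffun_pmf (coin p)) [pred s | t < (sel_count L s)%:R] <=
  expR (t - p * n%:R - t * ln (t / (p * n%:R))).
Proof.
move=> p01 /andP[pn0 pnt] nL; have /andP[p0 _] := p01.
have z1 : 1 <= t / (p * n%:R) by rewrite ler_pdivlMr // mul1r.
apply: le_trans (chernoff (b := t) (W := L) p01 (lt_le_trans ltr01 z1) _) _.
  move=> s /ltW hs; rewrite mulr_ge0 ?ln_ge0 //.
  by rewrite subr_ge0.
rewrite ler_expR.
have: p * (t / (p * n%:R) - 1) * #|L|%:R <= p * (t / (p * n%:R) - 1) * n%:R.
  by rewrite ler_wpM2l ?ler_nat // mulr_ge0 // subr_ge0.
have -> : p * (t / (p * n%:R) - 1) * n%:R = t - p * n%:R.
  by field; move: (lt0r_neq0 pn0); rewrite mulf_eq0 => /norP[-> ->].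
lra.
Qed.

End Chernoff.

Lemma ler_sum_nat_term (R : numDomainType) (F : nat -> R) (m n i : nat) :
  (m <= i < n)%N -> (forall j, 0 <= F j) -> F i <= \sum_(m <= j < n) F j.
Proof.
move=> hi F0; rewrite (bigD1_seq i) ?mem_index_iota ?iota_uniq //= lerDl.
exact: sumr_ge0.
Qed.

Lemma exists_first_index (Q : pred nat) (k : nat) : (0 < k)%N -> Q k ->
  exists2 i, (1 <= i <= k)%N & Q i && ((i == 1)%N || ~~ Q i.-1).
Proof.
move=> k0 Qk; have exQ : exists i, (0 < i)%N && Q i by exists k; rewrite k0.
case: (ex_minnP exQ) => i /andP[i0 Qi] imin.
have ik : (i <= k)%N by apply: imin; rewrite k0.
exists i; first by rewrite i0.
rewrite Qi /=; case: eqP => //= i1; apply/negP => Qi1.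
by have := imin i.-1; rewrite Qi1 andbT; lia.
Qed.

Section Layers.
Variables (R : realType) (a b : nat -> R).

Definition layer_ge (i : nat) (x : R) : bool :=
  (a i <= x) && ((i == 1)%N || (x < a i.-1)).
Definition layer_le (j : nat) (y : R) : bool :=
  (y <= b j) && ((j == 1)%N || (b j.-1 < y)).

Lemma le_sum_layers (k l : nat) (th : nat -> nat -> R) (f x y : R) :
  (0 < k)%N -> (0 < l)%N -> (forall i j, 0 <= th i j) ->
  a k <= x -> y <= b l ->
  (forall i j, (1 <= i <= k)%N -> (1 <= j <= l)%N -> a i <= x -> y <= b j ->
     f <= th i j) ->
  f <= \sum_(1 <= i < k.+1) \sum_(1 <= j < l.+1)
         th i j * ((layer_ge i x)%:R * (layer_le j y)%:R).
Proof.
move=> k0 l0 th0 xk yl hf.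
have [i ik /andP[xi ilayer]] := @exists_first_index (fun i => a i <= x) k k0 xk.
have [j jl /andP[yj jlayer]] := @exists_first_index (fun j => y <= b j) l l0 yl.
have term0 i' j' : 0 <= th i' j' * ((layer_ge i' x)%:R * (layer_le j' y)%:R).
  by rewrite !mulr_ge0.
apply: le_trans (hf i j ik jl xi yj) _.
have -> : th i j = th i j * ((layer_ge i x)%:R * (layer_le j y)%:R).
  by rewrite /layer_ge /layer_le xi yj !ltNge ilayer jlayer !mulr1.
apply: (@le_trans _ _ (\sum_(1 <= j' < l.+1)
    th i j' * ((layer_ge i x)%:R * (layer_le j' y)%:R))).
  by apply: (ler_sum_nat_term (F := fun j' => _)); rewrite ?ltnS.
apply: (ler_sum_nat_term (F := fun i' => \sum_(1 <= j' < l.+1) _)).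
  by rewrite ltnS.
by move=> i'; apply: sumr_ge0 => j' _.
Qed.

Lemma expect_layer_ge_le (T : finType) (w X : T -> R) (k : nat) (Z : nat -> R)
    (i : nat) :
  is_pmf w -> 1 <= Z 0%N ->
  (forall i, (1 <= i <= k)%N -> prob w [pred t | X t < a i] <= Z i) ->
  (1 <= i <= k)%N -> expect w (fun t => (layer_ge i (X t))%:R) <= Z i.-1.
Proof.
move=> pmf Z0 hZ /andP[i1 ik]; have [w0 _] := pmf.
have [-> | i_ne1] := eqVneq i 1%N.
  apply: le_trans Z0; rewrite -[X in _ <= X](expect_const 1 pmf).
  by apply: ler_expect => // t; rewrite /= lern1 leq_b1.
apply: le_trans (hZ i.-1 _); last by lia.
apply: ler_expect => // t; rewrite /layer_ge (negPf i_ne1) /= ler_nat.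
by case: (_ <= _).
Qed.

Lemma expect_layer_le_le (T : finType) (w Y : T -> R) (l : nat) (Xi : nat -> R)
    (j : nat) :
  is_pmf w -> 1 <= Xi 0%N ->
  (forall j, (1 <= j <= l)%N -> prob w [pred t | b j < Y t] <= Xi j) ->
  (1 <= j <= l)%N -> expect w (fun t => (layer_le j (Y t))%:R) <= Xi j.-1.
Proof.
move=> pmf Xi0 hXi /andP[j1 jl]; have [w0 _] := pmf.
have [-> | j_ne1] := eqVneq j 1%N.
  apply: le_trans Xi0; rewrite -[X in _ <= X](expect_const 1 pmf).
  by apply: ler_expect => // t; rewrite /= lern1 leq_b1.
apply: le_trans (hXi j.-1 _); last by lia.
apply: ler_expect => // t; rewrite /layer_le (negPf j_ne1) /= ler_nat.
by case: (_ <= _).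
Qed.

Lemma expect_le_layers (T1 T2 : finType) (w1 : T1 -> R) (w2 : T2 -> R)
    (X : T1 -> R) (Y : T2 -> R) (g : T1 -> T2 -> R) (k l : nat)
    (th : nat -> nat -> R) (Z Xi : nat -> R) :
  is_pmf w1 -> is_pmf w2 -> (0 < k)%N -> (0 < l)%N ->
  (forall i j, 0 <= th i j) -> (forall t1 t2, g t1 t2 <= 1) ->
  (forall i j t1 t2, (1 <= i <= k)%N -> (1 <= j <= l)%N ->
     a i <= X t1 -> Y t2 <= b j -> g t1 t2 <= th i j) ->
  1 <= Z 0%N ->
  (forall i, (1 <= i <= k)%N -> prob w1 [pred t | X t < a i] <= Z i) ->
  1 <= Xi 0%N ->
  (forall j, (1 <= j <= l)%N -> prob w2 [pred t | b j < Y t] <= Xi j) ->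
  expect w1 (fun t1 => expect w2 (g t1)) <=
  \sum_(1 <= i < k.+1) \sum_(1 <= j < l.+1) th i j * Z i.-1 * Xi j.-1
  + Z k + Xi l.
Proof.
move=> pmf1 pmf2 k0 l0 th0 g1 gth Z0 hZ Xi0 hXi.
have [[w10 _] [w20 _]] := (pmf1, pmf2).
pose D i t1 : R := (layer_ge i (X t1))%:R.
pose E j t2 : R := (layer_le j (Y t2))%:R.
pose lowX : pred T1 := [pred t | X t < a k].
pose highY : pred T2 := [pred t | b l < Y t].
pose S t1 t2 :=
  \sum_(1 <= i < k.+1) \sum_(1 <= j < l.+1) th i j * (D i t1 * E j t2).
have gS t1 t2 : g t1 t2 <= S t1 t2 + (lowX t1)%:R + (highY t2)%:R.
  have S0 : 0 <= S t1 t2 by do 2!(apply: sumr_ge0 => ? _); rewrite !mulr_ge0.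
  rewrite /lowX /highY /=; case: ltP => xk; case: ltP => yl.
  - by rewrite (le_trans (g1 _ _)) // lerDr addr_ge0.
  - by rewrite (le_trans (g1 _ _)) // addr0 lerDr.
  - by rewrite (le_trans (g1 _ _)) // lerDr addr0.
  by rewrite !addr0; apply: le_sum_layers => // i j hi hj; apply: gth.
have inner t1 : expect w2 (fun t2 => S t1 t2 + (lowX t1)%:R + (highY t2)%:R) =
    \sum_(1 <= i < k.+1) \sum_(1 <= j < l.+1) th i j * expect w2 (E j) * D i t1
    + (lowX t1)%:R + prob w2 highY.
  rewrite !expectD expect_const // expect_sum; congr (_ + _ + _).
  apply: eq_bigr => i _; rewrite expect_sum; apply: eq_bigr => j _.
  rewrite -mulrAC -expectZ; apply: eq_expect => t2; exact: mulrA.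
apply: le_trans (ler_expect w10 (fun t1 => ler_expect w20 (gS t1))) _.
rewrite (eq_expect _ inner) !expectD expect_const // expect_sum.
apply: lerD; last by apply: hXi; rewrite l0 /=.
apply: lerD; last by apply: hZ; rewrite k0 /=.
apply: ler_sum_nat => i; rewrite ltnS => ik.
rewrite expect_sum; apply: ler_sum_nat => j; rewrite ltnS => jl.
rewrite expectZ -!mulrA ler_wpM2l // mulrC.
apply: ler_pM; [exact: expect_ge0 | exact: expect_ge0 | |].
  exact: (expect_layer_ge_le pmf1 Z0 hZ ik).
exact: (expect_layer_le_le pmf2 Xi0 hXi jl).
Qed.

End Layers.

Lemma natr_forall (R : comPzSemiRingType) (I : finType) (P : pred I) :
  ([forall a, P a]%:R : R) = \prod_a (P a)%:R.
Proof.
case: (boolP [forall a, P a]) => [/forallP allP | /forallPn[a /negPf Pa]].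
  by rewrite big1 // => a _; rewrite allP.
by rewrite (bigD1 a) //= Pa mul0r.
Qed.

Lemma coin_half (R : realType) (b : bool) : coin (1 / 2 : R) b = 1 / 2.
Proof. by case: b; rewrite /coin // {1}(splitr 1) addrK. Qed.

Section Tournament.
Variables (R : realType) (I : finType).
Implicit Types (W L : {set I}) (s sw sl : {ffun I -> bool}).

Lemma prob_all_heads (p : R) W :
  prob (ffun_pmf (coin p)) [pred g : {ffun I -> bool} | [forall b in W, g b]] =
  p ^+ #|W|.
Proof.
transitivity (expect (ffun_pmf (coin p)) (fun g => \prod_b ((b \in W) ==> g b)%:R)).
  by apply: eq_expect => g; rewrite /= natr_forall.
rewrite (expect_prod _ (fun b x => ((b \in W) ==> x)%:R)).
rewrite -prodr_const [RHS]big_mkcond; apply: eq_bigr => b _.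
rewrite expect_coin; case: (b \in W); rewrite /= ?mulr1 ?mulr0 ?addr0 //.
by rewrite addrC subrK.
Qed.

(* [G a b] means that action [a] beats action [b]. *)
Definition fair_tournament : {ffun I -> {ffun I -> bool}} -> R :=
  ffun_pmf (ffun_pmf (coin (1 / 2))).

Definition has_dominant W L sw sl (G : {ffun I -> {ffun I -> bool}}) : bool :=
  [exists a in selection W sw, [forall b in selection L sl, G a b]].

Lemma prob_no_dominant W L sw sl :
  prob fair_tournament [pred G | ~~ has_dominant W L sw sl G] =
  (1 - (1 / 2) ^+ sel_count L sl) ^+ sel_count W sw.
Proof.
have pmf := is_pmf_ffun I (is_pmf_coin (half_ge0_le1 R)).
transitivity (expect fair_tournament (fun G => \prod_a
    (1 - (a \in selection W sw)%:R * [forall b in selection L sl, G a b]%:R))).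
  apply: eq_expect => G; rewrite /= negb_exists natr_forall; apply: eq_bigr => a _.
  by case: (a \in _); case: [forall _ in _, _];
    rewrite /= ?mul1r ?mul0r ?subr0 ?subrr.
rewrite /fair_tournament (expect_prod _ (fun a (g : {ffun I -> bool}) =>
  1 - (a \in selection W sw)%:R * [forall b in selection L sl, g b]%:R)).
rewrite /sel_count -prodr_const [RHS]big_mkcond; apply: eq_bigr => a _.
have := prob_all_heads (1 / 2) (selection L sl); rewrite /prob /= => heads.
rewrite expectB expect_const // expectZ heads.
by case: (a \in _); rewrite ?mul1r ?mul0r ?subr0.
Qed.

Definition swap_tournament (G : {ffun I -> {ffun I -> bool}}) :
    {ffun I -> {ffun I -> bool}} :=
  [ffun a => [ffun b => ~~ G b a]].

Lemma swap_tournamentK : involutive swap_tournament.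
Proof. by move=> G; apply/ffunP => a; apply/ffunP => b; rewrite !ffunE negbK. Qed.

Lemma fair_tournament_swap G :
  fair_tournament (swap_tournament G) = fair_tournament G.
Proof.
by apply: eq_bigr => a _; apply: eq_bigr => b _; rewrite !coin_half.
Qed.

End Tournament.

Section RandomPolicy.
Variables (R : realType) (A : finType).
Implicit Types (M : agent -> option A -> option A -> R) (s : {ffun A -> bool})
  (G : {ffun A -> {ffun A -> bool}}) (W L : {set A}).

Lemma mem_with_delta (C : {set A}) a : (Some a \in with_delta C) = (a \in C).
Proof.
rewrite !inE /=; apply/imsetP/idP => [[a' Ca' [->]] // | Ca].
by exists a.
Qed.

Lemma with_deltaP (C : {set A}) b :
  b \in with_delta C -> b = None \/ exists2 a, b = Some a & a \in C.
Proof. by case: b => [a|]; [rewrite mem_with_delta; right; exists a | left]. Qed.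

Lemma payoff01 M i a b : is_policy M -> 0 <= payoff M i a b <= 1.
Proof. by case=> M01 _; case: i; apply: M01. Qed.

Lemma game_value_le M i (Di Do : {set option A}) a0 b0 (c : R) :
  is_policy M -> a0 \in Di -> b0 \in Do ->
  (forall a, a \in Di -> payoff M i a b0 <= c) -> game_value M i Di Do <= c.
Proof.
move=> pol a0D b0D hc.
have payoff0 a b : 0 <= payoff M i a b by case/andP: (payoff01 i a b pol).
apply: ge_sup => [|v [x [[x0 [xD x1]] hv]]].
  exists 0, (fun a => (a == a0)%:R); split; last first.
    by move=> b _; apply: sumr_ge0 => a _; rewrite mulr_ge0.
  split=> [a|]; first by [].
  split=> [a aD|]; first by case: eqP aD => // ->; rewrite a0D.
  by rewrite (bigD1 a0) //= eqxx big1 ?addr0 // => a /negPf ->.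
apply: le_trans (hv b0 b0D) _; rewrite -[c]mul1r -x1 big_distrl /=.
apply: ler_sum => a _; case: (boolP (a \in Di)) => aD.
  by rewrite ler_wpM2l ?hc.
by rewrite xD ?mul0r.
Qed.

Lemma game_value_with_delta_le1 M i (C1 C2 : {set A}) :
  is_policy M -> game_value M i (with_delta C1) (with_delta C2) <= 1.
Proof.
move=> hM; apply: (game_value_le (a0 := None) (b0 := None)) => // [||a _].
- by rewrite setU11.
- by rewrite setU11.
by case/andP: (payoff01 i a None hM).
Qed.

Definition selected s (a : option A) : bool := if a is Some a' then s a' else false.

Definition beats G (a1 a2 : option A) : bool :=
  if (a1, a2) is (Some b1, Some b2) then G b1 b2 else false.

Definition win_prob s1 s2 G (a1 a2 : option A) : R :=
  if selected s1 a1 then (if selected s2 a2 then (beats G a1 a2)%:R else 1)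
  else (if selected s2 a2 then 0 else 1 / 2).

Definition random_policy s1 s2 G (i : agent) (a1 a2 : option A) : R :=
  match i with
  | Ag1 => win_prob s1 s2 G a1 a2
  | Ag2 => 1 - win_prob s1 s2 G a1 a2
  end.

Lemma is_policy_random_policy s1 s2 G : is_policy (random_policy s1 s2 G).
Proof.
have win01 a1 a2 : 0 <= win_prob s1 s2 G a1 a2 <= 1.
  rewrite /win_prob; case: (selected s1 a1); case: (selected s2 a2);
    rewrite ?ler01 ?lexx ?ler0n ?lern1 ?leq_b1 ?half_ge0_le1 //.
split=> [[] a1 a2 | a1 a2] /=; last by rewrite addrC subrK.
  exact: win01.
by have /andP[w0 w1] := win01 a1 a2; rewrite subr_ge0 w1 lerBlDr lerDl.
Qed.

Lemma loser2_value_le s1 s2 G W L :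
  game_value (random_policy s1 s2 G) Ag2 (with_delta L) (with_delta W) <=
  (~~ has_dominant W L s1 s2 G)%:R.
Proof.
have pol := is_policy_random_policy s1 s2 G.
case: (boolP (has_dominant W L s1 s2 G)) => [/exists_inP[a0 a0W a0beats] | _].
  apply: (game_value_le (a0 := None) (b0 := Some a0)) => //.
  - by rewrite setU11.
  - by move: a0W; rewrite inE mem_with_delta => /andP[].
  move: a0W; rewrite inE => /andP[_ s1a0] a /with_deltaP[-> | [b -> bL]] /=.
    by rewrite /win_prob /= s1a0 subrr.
  rewrite /win_prob /= s1a0; case s2b: (s2 b); last by rewrite subrr.
  by rewrite /beats /= (forall_inP a0beats) ?subrr // inE bL s2b.
by rewrite /=; apply: game_value_with_delta_le1.
Qed.

Lemma loser1_value_le s1 s2 G W L :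
  game_value (random_policy s1 s2 G) Ag1 (with_delta L) (with_delta W) <=
  (~~ has_dominant W L s2 s1 (swap_tournament G))%:R.
Proof.
have pol := is_policy_random_policy s1 s2 G.
case: (boolP (has_dominant W L s2 s1 _)) => [/exists_inP[a0 a0W a0beats] | _].
  apply: (game_value_le (a0 := None) (b0 := Some a0)) => //.
  - by rewrite setU11.
  - by move: a0W; rewrite inE mem_with_delta => /andP[].
  move: a0W; rewrite inE => /andP[_ s2a0] a /with_deltaP[-> | [b -> bL]] /=.
    by rewrite /win_prob /= s2a0.
  rewrite /win_prob /= s2a0; case s1b: (s1 b) => //.
  move/forall_inP: a0beats => /(_ b); rewrite /beats inE bL s1b !ffunE.
  by move=> /(_ isT)/negPf ->.
by rewrite /=; apply: game_value_with_delta_le1.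
Qed.

End RandomPolicy.

Section RandomPolicyError.
Variables (R : realType) (A : finType) (p : R).
Hypothesis p01 : 0 <= p <= 1.

Local Notation seed :=
  (({ffun A -> bool} * {ffun A -> bool}) * {ffun A -> {ffun A -> bool}})%type.

Definition policy_pmf : seed -> R :=
  pair_pmf (pair_pmf (ffun_pmf (coin p)) (ffun_pmf (coin p)))
    (@fair_tournament R A).

Definition policy_of (om : seed) : agent -> option A -> option A -> R :=
  @random_policy R A om.1.1 om.1.2 om.2.

Lemma is_pmf_policy : is_pmf policy_pmf.
Proof.
by do 2?apply: is_pmf_pair; do ?apply: is_pmf_ffun; apply: is_pmf_coin;
  rewrite ?half_ge0_le1.
Qed.

Lemma expect_no_dominant (W L : {set A}) :
  expect policy_pmf (fun om => (~~ has_dominant W L om.1.1 om.1.2 om.2)%:R) =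
  expect (ffun_pmf (coin p)) (fun sw => expect (ffun_pmf (coin p)) (fun sl =>
    (1 - (1 / 2) ^+ sel_count L sl) ^+ sel_count W sw)).
Proof.
rewrite !expect_pair; apply: eq_expect => sw; apply: eq_expect => sl.
exact: prob_no_dominant.
Qed.

(* With the roles of the agents exchanged, agent 2's actions beat agent 1's
   according to [swap_tournament G], which is again a fair tournament. *)
Lemma expect_no_dominant_swap (W L : {set A}) :
  expect policy_pmf
    (fun om => (~~ has_dominant W L om.1.2 om.1.1 (swap_tournament om.2))%:R) =
  expect policy_pmf (fun om => (~~ has_dominant W L om.1.1 om.1.2 om.2)%:R).
Proof.
pose phi (om : seed) := ((om.1.2, om.1.1), swap_tournament om.2).
pose f (om : seed) : R := (~~ has_dominant W L om.1.1 om.1.2 om.2)%:R.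
apply: (@expect_invol _ _ _ f phi).
  by case=> [[s1 s2] G]; rewrite /phi /= swap_tournamentK.
case=> [[s1 s2] G]; rewrite /policy_pmf /pair_pmf /= fair_tournament_swap.
by rewrite (mulrC (ffun_pmf _ s2)).
Qed.

Variables (S : finType) (P : S -> R) (Cw Cl : S -> {set A}) (m n : nat) (B : R).
Hypothesis B0 : 0 <= B.
Let bad (s : S) : bool := (#|Cw s| < m)%N || (n < #|Cl s|)%N.
Hypothesis good_le : forall W L : {set A}, (m <= #|W|)%N -> (#|L| <= n)%N ->
  expect (ffun_pmf (coin p)) (fun sw => expect (ffun_pmf (coin p)) (fun sl =>
    (1 - (1 / 2) ^+ sel_count L sl) ^+ sel_count W sw)) <= B.

Lemma expect_mean_loser_value_le s :
  expect policy_pmf (fun om =>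
    (w Cw Cl (policy_of om) Ag1 Ag2 s + w Cw Cl (policy_of om) Ag2 Ag1 s) / 2)
  <= B + (bad s)%:R.
Proof.
have [pmf0 _] := is_pmf_policy.
set c := B + _.
suff [v1 v2] :
    expect policy_pmf (fun om => w Cw Cl (policy_of om) Ag1 Ag2 s) <= c /\
    expect policy_pmf (fun om => w Cw Cl (policy_of om) Ag2 Ag1 s) <= c.
  rewrite (eq_expect _ (fun om => mulrC _ _)) expectZ expectD; lra.
have le1 i j : expect policy_pmf (fun om => w Cw Cl (policy_of om) i j s) <= 1.
  rewrite -(expect_const 1 is_pmf_policy); apply: ler_expect => // om.
  rewrite /w; case: ifP => _;
    by apply/game_value_with_delta_le1/is_policy_random_policy.
rewrite /c /bad; case: (boolP (_ || _)) => [_ | /norP[]]; rewrite -?leqNgt.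
  by split; apply: le_trans (le1 _ _) _; rewrite lerDr.
move=> mW nL; rewrite addr0; split.
- apply: le_trans (good_le mW nL).
  rewrite -expect_no_dominant -expect_no_dominant_swap.
  by apply: ler_expect => // om; apply: loser1_value_le.
- apply: le_trans (good_le mW nL); rewrite -expect_no_dominant.
  by apply: ler_expect => // om; apply: loser2_value_le.
Qed.

Theorem exists_policy_error_le (eps : R) : is_pmf P ->
  \sum_(s | bad s) P s <= eps ->
  exists M, is_policy M /\ policy_error P Cw Cl M <= B + eps.
Proof.
move=> [P0 P1] bad_le.
have [om hom] := exists_le_expect (fun om => policy_error P Cw Cl (policy_of om))
  is_pmf_policy.
exists (policy_of om); split; first exact: is_policy_random_policy.
apply: le_trans hom _; rewrite /policy_error expect_sum.
apply: (@le_trans _ _ (\sum_s P s * (B + (bad s)%:R))).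
  by apply: ler_sum => s _; rewrite expectZ ler_wpM2l ?expect_mean_loser_value_le.
rewrite (eq_bigr (fun s => B * P s + P s * (bad s)%:R)).
  rewrite big_split /= -big_distrr /= P1 mulr1 lerD2l; apply: le_trans bad_le.
  rewrite [X in _ <= X]big_mkcond /=; apply: ler_sum => s _.
  by case: (bad s); rewrite ?mulr1 ?mulr0.
by move=> s _; rewrite mulrDr mulrC.
Qed.

End RandomPolicyError.

Section ParameterBounds.
Variable R : realType.

Lemma one_sub_half_pow_le (x y : nat) (c t : R) :
  0 <= c <= x%:R -> y%:R <= t ->
  (1 - (1 / 2) ^+ y) ^+ x <= expR (- (c * expR (- (t * ln 2)))).
Proof.
move=> /andP[c0 cx] yt; have ln2 : 0 <= ln (2 : R) by rewrite ln_ge0 ?ler1n.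
have halfE : (1 / 2 : R) ^+ y = expR (- (y%:R * ln 2)).
  by rewrite -mulrN [y%:R * _]mulrC expRM_natr expRN lnK ?posrE // div1r.
apply: (@le_trans _ _ (expR (- (1 / 2) ^+ y) ^+ x)).
  apply: lerXn2r; rewrite ?nnegrE ?expR_ge0 ?expR_ge1Dx //.
  by have /andP[h0 h1] := half_ge0_le1 R; rewrite subr_ge0 exprn_ile1.
rewrite -expRM_natr ler_expR mulNr lerN2 halfE [X in _ <= X]mulrC.
by rewrite ler_pM ?expR_ge0 // ler_expR lerN2 ler_wpM2r.
Qed.

Lemma one_sub_half_pow_le1 (x y : nat) : (1 - (1 / 2 : R) ^+ y) ^+ x <= 1.
Proof.
have /andP[h0 h1] := half_ge0_le1 R.
by rewrite exprn_ile1 // ?subr_ge0 ?exprn_ile1 // lerBlDr lerDl exprn_ge0.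
Qed.

Lemma no_dominant_le_theta (r mu alpha nu : R) (x y : nat) :
  1 < r -> 0 <= mu * alpha * r <= x%:R -> y%:R <= nu * log2 r ->
  (1 - (1 / 2) ^+ y) ^+ x <= expR (- (mu * alpha * powR r (1 - nu))).
Proof.
move=> r1 hx hy; apply: le_trans (one_sub_half_pow_le hx hy) _.
have ln2 : 0 < ln (2 : R) by rewrite ln_gt0 ?ltr1n.
have r0 : 0 < r := lt_trans ltr01 r1.
rewrite /powR gt_eqF // mulrBl mul1r expRD lnK ?posrE //.
have -> : nu * log2 r * ln 2 = nu * ln r by rewrite -mulrA divfK ?gt_eqF.
by rewrite !mulrA.
Qed.

Lemma prob_sel_count_gt_le_xi (I : finType) (L : {set I}) (p r alpha nu : R)
    (n : nat) :
  0 <= p <= 1 -> p * n%:R = alpha -> 0 < alpha <= nu * log2 r -> 1 < r ->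
  (#|L| <= n)%N ->
  prob (ffun_pmf (coin p)) [pred s | nu * log2 r < (sel_count L s)%:R] <=
  expR (- alpha) * powR r (- (nu * log2 (nu * log2 r / (expR 1 * alpha)))).
Proof.
move=> p01 pn /andP[a0 at_] r1 nL; set t := nu * log2 r.
have t0 : 0 < t := lt_le_trans a0 at_.
apply: le_trans (chernoff_upper p01 _ nL) _; first by rewrite pn a0.
rewrite pn /powR gt_eqF ?(lt_trans ltr01) // -expRD ler_expR.
have -> : - (nu * log2 (t / (expR 1 * alpha))) * ln r =
    - (t * ln (t / (expR 1 * alpha))) by rewrite /t /log2; ring.
have ea : 0 < expR 1 * alpha by rewrite mulr_gt0 ?expR_gt0.
rewrite !ln_div ?posrE // lnM ?posrE ?expR_gt0 // expRK.
by rewrite le_eqVlt; apply/orP; left; apply/eqP; ring.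
Qed.

End ParameterBounds.

Unset Implicit Arguments.

Theorem theorem5p1 (R : realType) (A S : finType) (P : S -> R)
  (Cw Cl : S -> {set A}) (m n : nat) (eps alpha : R) (k l : nat)
  (mu nu : nat -> R) :
  is_pmf P ->
  (0 < m)%N -> (0 < n)%N ->
  0 <= eps <= 1 ->
  \sum_(s | (#|Cw s| < m)%N || (n < #|Cl s|)%N) P s <= eps ->
  (n < m)%N ->
  let r : R := m%:R / n%:R in
  0 < alpha <= 1 ->
  (0 < k)%N -> (0 < l)%N ->
  (forall i, (1 <= i <= k)%N -> 0 < mu i <= 1) ->
  (forall i, (1 <= i < k)%N -> mu i.+1 <= mu i) ->
  (forall j, (1 <= j <= l)%N -> alpha / log2 r <= nu j) ->
  (forall j, (1 <= j < l)%N -> nu j <= nu j.+1) ->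
  let theta i j := expR (- (mu i * alpha * powR r (1 - nu j))) in
  let zeta i := if i == 0%N then 1
                else expR (- (alpha * r)) *
                     powR (expR 1 / mu i) (mu i * alpha * r) in
  let xi j := if j == 0%N then 1
              else expR (- alpha) *
                   powR r (- (nu j * log2 (nu j * log2 r / (expR 1 * alpha)))) in
  exists M : agent -> option A -> option A -> R,
    is_policy M /\
    policy_error P Cw Cl M <=
      \sum_(1 <= i < k.+1) \sum_(1 <= j < l.+1)
          theta i j * zeta i.-1 * xi j.-1
      + zeta k + xi l + eps.
Proof.
move=> P_pmf _ n0 _ bad_le nm r /andP[alpha0 alpha1] k0 l0 mu01 _ nu_ge _.
move=> theta zeta xi; set p := alpha / n%:R.
have r1 : 1 < r by rewrite /r ltr_pdivlMr ?ltr0n // mul1r ltr_nat.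
have r0 : 0 < r := lt_trans ltr01 r1.
have log2r : 0 < log2 r by rewrite /log2 divr_gt0 ?ln_gt0 ?ltr1n.
have p01 : 0 <= p <= 1.
  rewrite divr_ge0 ?(ltW alpha0) //= ler_pdivrMr ?ltr0n // mul1r.
  by rewrite (le_trans alpha1) ?ler1n.
have pn : p * n%:R = alpha by rewrite divfK // pnatr_eq0 -lt0n.
have pm : p * m%:R = alpha * r by rewrite mulrAC mulrA.
have zeta_xi_ge0 i : 0 <= zeta i /\ 0 <= xi i.
  by rewrite /zeta /xi; case: eqP => _; rewrite ?mulr_ge0 ?expR_ge0 ?powR_ge0.
apply: (exists_policy_error_le p01 _ _ P_pmf bad_le) => [|W L mW nL].
  rewrite !addr_ge0 ?(zeta_xi_ge0 k).1 ?(zeta_xi_ge0 l).2 //.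
  do 2!(apply: sumr_ge0 => ? _).
  by rewrite !mulr_ge0 ?expR_ge0 ?(zeta_xi_ge0 _).1 ?(zeta_xi_ge0 _).2.
have pmf := is_pmf_ffun A (is_pmf_coin p01).
apply: (expect_le_layers (a := fun i => mu i * alpha * r)
  (b := fun j => nu j * log2 r) (X := fun sw => (sel_count W sw)%:R)
  (Y := fun sl => (sel_count L sl)%:R) pmf pmf k0 l0 (fun i j => expR_ge0 _)
  (fun sw sl => one_sub_half_pow_le1 _ _ _)) => //.
- move=> i j sw sl /mu01/andP[mu0 _] _ mx yn; apply: no_dominant_le_theta => //.
  by rewrite mx andbT; apply/ltW/mulr_gt0; [exact: mulr_gt0 | exact: r0].
- move=> i /[dup] /mu01 mu01i /andP[i0 _]; rewrite /zeta (gtn_eqF i0).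
  by have := chernoff_lower p01 mu01i mW; rewrite pm !mulrA.
- move=> j /[dup] /nu_ge nuj /andP[j0 _]; rewrite /xi (gtn_eqF j0).
  by apply: (prob_sel_count_gt_le_xi (n := n)) => //; rewrite alpha0 -ler_pdivrMr.
Qed.
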